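(* Let $\rho$ be an $n$-qubit symmetric state and $\mathcal S$ a collection of subsets of $[n]$ such that the hypergraph $([n],\mathcal S)$ is connected. Then every $\sigma\in\mathcal C(\rho,\mathcal S)$ is a symmetric state.
   Context: Let $[n]=\{1,\dots,n\}$, $\mathcal H_{[n]}=(\mathbb C^2)^{\otimes n}$, and for $S\subseteq[n]$ let $\rho_S$ be the partial trace of $\rho$ over qubits outside $S$. $\mathcal C(\rho,\mathcal S)=\{\sigma\text{ density matrix on }\mathcal H_{[n]}:\sigma_S=\rho_S\ \forall S\in\mathcal S\}$. A state is symmetric if its range is contained in the subspace of vectors invariant under swapping any two qubits. The hypergraph $([n],\mathcal S)$ is connected if for every partition of $[n]$ into nonempty sets $X,Y$ some $S\in\mathcal S$ intersects both $X$ and $Y$. *)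

From HB Require Import structures.
From mathcomp Require Import all_boot all_order all_algebra all_fingroup.
Set Implicit Arguments. Unset Strict Implicit. Unset Printing Implicit Defensive.
Import Order.TTheory GRing.Theory Num.Theory.
Local Open Scope ring_scope.

(* Computational basis of (C^2)^{\otimes n}: bit strings x : 'I_n -> bool.
   A vector is a function basis n -> C, an operator a function basis n -> basis n -> C
   (matrix entries <x|A|y>). *)
Definition basis (n : nat) := {ffun 'I_n -> bool}.

Section Qubits.
Variable C : numClosedFieldType.
Variable n : nat.

Definition vect := basis n -> C.
Definition oper := basis n -> basis n -> C.

Definition apply_op (A : oper) (v : vect) : vect := fun x => \sum_y A x y * v y.

Definition density (A : oper) : Prop :=
  [/\ (forall x y, A x y = (A y x)^*),
      (forall v : vect, 0 <= \sum_x \sum_y (v x)^* * A x y * v y)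
    & \sum_x A x x = 1].

Definition glue (S : {set 'I_n}) (a z : basis n) : basis n :=
  [ffun i => if i \in S then a i else z i].

(* Partial trace over the qubits outside S.  rho_S is represented (redundantly)
   as an operator on the full basis whose entry at (a, b) depends only on the
   restrictions of a and b to S:  <a_S| rho_S |b_S> =
   sum over assignments z of the qubits outside S of <a_S z| rho |b_S z>. *)
Definition ptrace (S : {set 'I_n}) (A : oper) : oper :=
  fun a b => \sum_(z : basis n | [forall i in S, z i == false])
               A (glue S a z) (glue S b z).

Definition compat (rho : oper) (Sc : {set {set 'I_n}}) (sigma : oper) : Prop :=
  density sigma /\ forall S, S \in Sc -> ptrace S sigma =2 ptrace S rho.

Definition swap_basis (i j : 'I_n) (x : basis n) : basis n :=
  [ffun k => x (tperm i j k)].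

Definition sym_vect (v : vect) : Prop :=
  forall (i j : 'I_n) (x : basis n), v (swap_basis i j x) = v x.

Definition sym_state (A : oper) : Prop :=
  density A /\ forall v : vect, sym_vect (apply_op A v).

Definition hconnected (Sc : {set {set 'I_n}}) : Prop :=
  forall X : {set 'I_n}, X != set0 -> ~: X != set0 ->
    exists2 S, S \in Sc & (S :&: X != set0) && (S :&: ~: X != set0).

End Qubits.

From mathcomp Require Import all_boot all_order all_algebra all_fingroup.
From mathcomp Require Import ring.
Set Implicit Arguments. Unset Strict Implicit. Unset Printing Implicit Defensive.
Import Order.TTheory GRing.Theory Num.Theory.
Local Open Scope ring_scope.

(* For a swap P of two qubits lying in a common S of the hypergraph,
   Tr(sigma P) only depends on sigma_S = rho_S, so Tr(sigma P) = Tr(rho P) = 1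
   because rho is symmetric.  For a state, Tr(sigma P) = 1 forces P sigma = sigma:
   the vectors |x> - |Px> then have zero sigma-expectation, hence lie in the
   kernel of the positive operator sigma.  So sigma is invariant under swaps
   within each S, and since swaps compose by conjugation, invariance spreads
   along the connected hypergraph to all swaps. *)

Section SesquilinearForm.
Variables (C : numClosedFieldType) (I : finType).
Implicit Types (A : I -> I -> C) (u v w : I -> C) (s t : C).

Definition form A w u : C := \sum_x \sum_y (w x)^* * A x y * u y.
Definition hermitian A := forall x y, A x y = (A y x)^*.
Definition psd A := forall v, 0 <= form A v v.
Definition lincomb s u t v : I -> C := fun x => s * u x + t * v x.
Definition delta (p : I) : I -> C := fun x => (x == p)%:R.

Lemma form_lincombl A s u t v w :
  form A (lincomb s u t v) w = s^* * form A u w + t^* * form A v w.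
Proof.
rewrite /form !mulr_sumr -big_split; apply: eq_bigr => x _.
rewrite !mulr_sumr -big_split; apply: eq_bigr => y _.
rewrite /lincomb rmorphD !rmorphM /=; ring.
Qed.

Lemma form_lincombr A s u t v w :
  form A w (lincomb s u t v) = s * form A w u + t * form A w v.
Proof.
rewrite /form !mulr_sumr -big_split; apply: eq_bigr => x _.
rewrite !mulr_sumr -big_split; apply: eq_bigr => y _.
rewrite /lincomb /=; ring.
Qed.

Lemma form_delta A p q : form A (delta p) (delta q) = A p q.
Proof.
rewrite /form (bigD1 p) //= [X in _ + X]big1 => [|x /negbTE xp]; last first.
  by apply: big1 => y _; rewrite /delta xp rmorph0 !mul0r.
rewrite addr0 (bigD1 q) //= [X in _ + X]big1 => [|y /negbTE yq]; last first.
  by rewrite /delta yq mulr0.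
by rewrite /delta !eqxx rmorph1 addr0 mul1r mulr1.
Qed.

Lemma form_adj A u w : hermitian A -> (form A u w)^* = form A w u.
Proof.
move=> hA; rewrite /form rmorph_sum exchange_big /=; apply: eq_bigr => y _.
rewrite rmorph_sum; apply: eq_bigr => x _.
rewrite !rmorphM /= conjCK -hA; ring.
Qed.

Lemma psd_form_ker A u : hermitian A -> psd A ->
  form A u u = 0 -> forall w, form A w u = 0.
Proof.
move=> hA psdA uu0 w.
set b := form A w w; set c := form A w u.
have b_ge0 : 0 <= b by apply: psdA.
(* test positivity on (b + 1) u - c w, whose form is -|c|^2 (b + 2) *)
have := psdA (lincomb (b + 1) u (- c) w).
rewrite form_lincombl !form_lincombr uu0 -(form_adj w u hA) -/b -/c.
rewrite rmorphD rmorph1 rmorphN /= (geC0_conj b_ge0).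
have -> : (b + 1) * ((b + 1) * 0 + - c * c^*) + - c^* * ((b + 1) * c + - c * b)
   = - ((c * c^*) * (b + 2)) by ring.
rewrite oppr_ge0 => cc_le0.
have cc_ge0 : 0 <= (c * c^*) * (b + 2).
  by apply: mulr_ge0; [apply: mul_conjC_ge0 | apply: addr_ge0].
have /eqP : (c * c^*) * (b + 2) = 0 by apply/le_anti; rewrite cc_le0 cc_ge0.
rewrite mulf_eq0 mul_conjC_eq0 => /orP [/eqP //|].
by rewrite gt_eqF // ltr_wpDl.
Qed.

Lemma trace_involution_invariant A (P : I -> I) : involutive P ->
  hermitian A -> psd A -> \sum_x A (P x) x = \sum_x A x x ->
  forall x y, A (P x) y = A x y.
Proof.
move=> PK hA psdA trP x y.
have Pinj : injective P by apply: inv_inj.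
pose u z := lincomb 1 (delta z) (-1) (delta (P z)).
have uE z : form A (u z) (u z) = (A z z - A (P z) z) + (A (P z) (P z) - A z (P z)).
  by rewrite form_lincombl !form_lincombr !form_delta rmorph1 rmorphN1; ring.
have u0 : form A (u x) (u x) = 0.
  apply: (psumr_eq0P (P := predT) (F := fun z => form A (u z) (u z))) => //.
  under eq_bigr => z _ do rewrite uE.
  have sumPP : \sum_z A (P z) (P z) = \sum_z A z z.
    by rewrite [RHS](reindex_inj Pinj).
  have sumP : \sum_z A z (P z) = \sum_z A (P z) z.
    by rewrite [RHS](reindex_inj Pinj); apply: eq_bigr => z _; rewrite PK.
  by rewrite big_split /= !sumrB sumPP sumP trP !subrr addr0.
have /eqP := psd_form_ker hA psdA u0 (delta y).
rewrite form_lincombr !form_delta mul1r mulN1r subr_eq0 => /eqP Axy.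
by rewrite hA -Axy -hA.
Qed.

End SesquilinearForm.

Lemma hconnected_total n (Sc : {set {set 'I_n}}) (r : rel 'I_n) :
  reflexive r -> transitive r ->
  (forall S, S \in Sc -> {in S &, forall a b, r a b}) ->
  hconnected Sc -> forall i j, r i j.
Proof.
move=> r_refl r_trans rS hc i j.
pose X := [set k | r i k].
have [XC|XC] := eqVneq (~: X) set0.
  have : j \notin ~: X by rewrite XC inE.
  by rewrite !inE negbK.
have XN : X != set0 by apply/set0Pn; exists i; rewrite inE r_refl.
have [S SSc /andP [/set0Pn [a /setIP [aS]]]] := hc X XN XC.
rewrite inE => r_ia /set0Pn [b /setIP [bS]].
by rewrite !inE (r_trans _ _ _ r_ia (rS S SSc a b aS bS)).
Qed.

Section Qubits.
Variables (C : numClosedFieldType) (n : nat).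
Implicit Types (A rho sigma : oper C n) (S : {set 'I_n}) (i j k : 'I_n).

Lemma swap_basisK i j : involutive (swap_basis i j).
Proof. by move=> x; apply/ffunP => k; rewrite !ffunE tpermK. Qed.

Lemma swap_basis_id i x : swap_basis i i x = x.
Proof. by apply/ffunP => k; rewrite ffunE tperm1 perm1. Qed.

Lemma swap_basis_conj i j k x : k != i -> k != j ->
  swap_basis i k x = swap_basis i j (swap_basis j k (swap_basis i j x)).
Proof.
move=> ki kj; apply/ffunP => m; rewrite !ffunE.
have := permJ (tperm j k) (tperm i j) (tperm i j m).
by rewrite tpermK tpermJ tpermR (@tpermD _ i j k) 1?eq_sym // => ->.
Qed.

Definition restrict S (x : basis n) : basis n :=
  [ffun k => if k \in S then x k else false].

Lemma sum_glue S (F : basis n -> C) :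
  \sum_x F x = \sum_(a : basis n | [forall k in ~: S, a k == false])
                 \sum_(z : basis n | [forall k in S, z k == false]) F (glue S a z).
Proof.
rewrite pair_big_dep /= (reindex (fun x => (restrict S x, restrict (~: S) x))) /=.
  apply: eq_big => [x|x _].
    apply/esym/andP; split; apply/forallP => k; apply/implyP; rewrite ?inE !ffunE.
      by move=> /negbTE ->.
    by rewrite inE => ->.
  by congr F; apply/ffunP => k; rewrite !ffunE inE; case: (k \in S).
exists (fun p => glue S p.1 p.2) => [x _|[a z]] /=.
  by apply/ffunP => k; rewrite !ffunE inE; case: (k \in S).
rewrite inE /= => /andP [/forallP a0 /forallP z0].
congr pair; apply/ffunP => k; rewrite !ffunE ?inE.
  by case kS: (k \in S) => //; have := a0 k; rewrite inE kS => /eqP ->.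
by case kS: (k \in S) => //=; have := z0 k; rewrite kS => /eqP ->.
Qed.

Lemma glue_swap S i j a z : i \in S -> j \in S ->
  glue S (swap_basis i j a) z = swap_basis i j (glue S a z).
Proof.
move=> iS jS; apply/ffunP => k; rewrite !ffunE.
by case: (tpermP i j k) => [->|->|//]; rewrite iS jS.
Qed.

Lemma trace_swap_ptrace A S i j : i \in S -> j \in S ->
  \sum_x A (swap_basis i j x) x =
  \sum_(a : basis n | [forall k in ~: S, a k == false]) ptrace S A (swap_basis i j a) a.
Proof.
move=> iS jS; rewrite (sum_glue S); apply: eq_bigr => a _.
by apply: eq_bigr => z _; rewrite glue_swap.
Qed.

Lemma apply_op_delta A x y : apply_op A (delta C y) x = A x y.
Proof.
rewrite /apply_op (bigD1 y) //= big1 ?addr0; first by rewrite /delta eqxx mulr1.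
by move=> b /negbTE by'; rewrite /delta by' mulr0.
Qed.

Lemma sym_state_swap A i j x y : sym_state A -> A (swap_basis i j x) y = A x y.
Proof. by case=> _ symA; rewrite -!apply_op_delta symA. Qed.

Lemma compat_swap rho Sc sigma S i j :
  sym_state rho -> compat rho Sc sigma -> S \in Sc -> i \in S -> j \in S ->
  forall x y, sigma (swap_basis i j x) y = sigma x y.
Proof.
move=> symrho [[herm psdsigma trsigma] ptraceE] SSc iS jS.
apply: (trace_involution_invariant (swap_basisK i j)) => //.
rewrite trsigma (trace_swap_ptrace _ iS jS).
under eq_bigr => a _ do rewrite (ptraceE S SSc).
rewrite -(trace_swap_ptrace _ iS jS).
under eq_bigr => x _ do rewrite (sym_state_swap _ _ _ _ symrho).
by case: symrho => [[_ _ ->]].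
Qed.

Definition swap_invariant A i j : bool :=
  [forall x, forall y, A (swap_basis i j x) y == A x y].

Lemma swap_invariantP A i j :
  reflect (forall x y, A (swap_basis i j x) y = A x y) (swap_invariant A i j).
Proof.
apply: (iffP forallP) => [invA x y|invA x]; first by have /forallP/(_ y)/eqP := invA x.
by apply/forallP => y; rewrite invA.
Qed.

Lemma swap_invariant_refl A : reflexive (swap_invariant A).
Proof. by move=> i; apply/swap_invariantP => x y; rewrite swap_basis_id. Qed.

Lemma swap_invariant_trans A : transitive (swap_invariant A).
Proof.
move=> j i k /swap_invariantP Aij /swap_invariantP Ajk; apply/swap_invariantP => x y.
have [->|ki] := eqVneq k i; first by rewrite swap_basis_id.
have [->|kj] := eqVneq k j; first exact: Aij.
by rewrite (swap_basis_conj _ ki kj) Aij Ajk Aij.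
Qed.

End Qubits.

Theorem mainTheorem13 (C : numClosedFieldType) (n : nat)
  (rho : oper C n) (Sc : {set {set 'I_n}}) :
  sym_state rho -> hconnected Sc ->
  forall sigma : oper C n, compat rho Sc sigma -> sym_state sigma.
Proof.
move=> symrho hc sigma compat_sigma.
have invariant : forall i j, swap_invariant sigma i j.
  apply: hconnected_total hc => [||S SSc i j iS jS].
  - exact: swap_invariant_refl.
  - exact: swap_invariant_trans.
  - by apply/swap_invariantP; apply: compat_swap symrho compat_sigma SSc iS jS.
split; first by case: compat_sigma.
move=> v i j x; apply: eq_bigr => y _.
by have /swap_invariantP -> := invariant i j.
Qed.
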